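(* Let $n\ge3$ and suppose $T=T_\lambda(r,m)$ acts linearly and inner faithfully on $\Bbbk\overline{Q}$ so that $g$ acts by a rotation: $g\cdot e_i=e_{i+d}$, $g\cdot a_i=\mu_ia_{i+d}$, $g\cdot a_i^*=\mu_i^*a^*_{i+d}$ for some integer $0<d\le n-1$ and $\mu_i,\mu_i^*\in\Bbbk^\times$. Let $\sigma$ be the quiver-Taft map of the action. Then there exist $c_0,c_1,c_0^*,c_1^*\in\Bbbk$ such that for all $0\le i\le n-1$ (empty products being $1$): $$\sigma(a_i)=\begin{cases}\lambda^{i/2}\frac{\mu_i\mu_{i-2}\cdots\mu_2}{\mu^*_{i-1}\mu^*_{i-3}\cdots\mu^*_1}c_0a^*_{i-1} & d=n-2,\ i\text{ even},\\ \lambda^{(i-1)/2}\frac{\mu_i\mu_{i-2}\cdots\mu_3}{\mu^*_{i-1}\mu^*_{i-3}\cdots\mu^*_2}c_1a^*_{i-1} & d=n-2,\ i\text{ odd},\\ \lambda^i(\mu_i\mu_{i-1}\cdots\mu_1)c_0e_i & d=n-1,\\ 0 & d\ne n-1,n-2,\end{cases}$$ $$\sigma(a_i^* )=\begin{cases}\lambda^{-i/2}\frac{\mu_{i-1}\mu_{i-3}\cdots\mu_1}{\mu^*_{i-2}\mu^*_{i-4}\cdots\mu^*_0}c_0^*a_{i+1} & d=2,\ i\text{ even},\\ \lambda^{-(i-1)/2}\frac{\mu_{i-1}\mu_{i-3}\cdots\mu_2}{\mu^*_{i-2}\mu^*_{i-4}\cdots\mu^*_1}c_1^*a_{i+1}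 & d=2,\ i\text{ odd},\\ (\lambda^i\mu^*_{i-1}\mu^*_{i-2}\cdots\mu^*_0)^{-1}c_0^*e_{i+1} & d=1,\\ 0 & d\neq1,2.\end{cases}$$
   Context: Let $\Bbbk$ be a field, $r>1$ and $m$ positive integers with $r\mid m$, and $\lambda\in\Bbbk$ a primitive $r$-th root of unity, with $r$ coprime to the characteristic of $\Bbbk$. The generalized Taft algebra $T=T_\lambda(r,m)$ is the Hopf algebra generated by $g,x$ with relations $gx=\lambda xg$, $g^m=1$, $x^r=0$, $\Delta(g)=g\otimes g$, $\Delta(x)=1\otimes x+x\otimes g$, $\varepsilon(g)=1,\varepsilon(x)=0$, $S(g)=g^{-1}$, $S(x)=-xg^{-1}$. An action of $T$ on an algebra $A$ is a $T$-module algebra structure; so $g$ acts by an algebra automorphism and $x\cdot(ab)=a(x\cdot b)+(x\cdot a)(g\cdot b)$. It is inner faithful if no nonzero Hopf ideal $I$ of $T$ satisfies $I\cdot A=0$. Vertex indices are taken modulo $n$. $\overline{Q}$ has vertices $0,\dots,n-1$ and arrows $a_i:i\to i+1$, $a_i^*:i+1\to i$; in $\Bbbk\overline{Q}$, $e_i$ is the trivial path at $i$, $s(a),t(a)$ source and target, and $pq$ is concatenation ($p$ then $q$) if $t(p)=s(q)$, else $0$. A linear action: $g$ acts by a path-length-preserving automorphism ($g\cdot e_i=e_{g\cdot i}$) and $x$ maps vertices into the span of vertices and arrows into the span of vertices and arrows. Then there are scalars $\gamma_i$ with $x\cdot e_i=\gamma_ie_i-\gamma_i\lambda^{-1}e_{g\cdot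 i}$; the quiver-Taft map $\sigma$ is the linear map on the span of vertices and arrows with $\sigma(e_i)=0$ and $\sigma(a)=x\cdot a-\gamma_{t(a)}a+\gamma_{s(a)}\lambda^{-1}(g\cdot a)$ for arrows $a$. (It satisfies $\sigma(a)=e_{s(a)}\sigma(a)e_{g\cdot t(a)}$ and $\sigma(g\cdot a)=\lambda^{-1}g\cdot\sigma(a)$.) *)

From HB Require Import structures.
From mathcomp Require Import all_boot all_order all_algebra.
Set Implicit Arguments. Unset Strict Implicit. Unset Printing Implicit Defensive.
Import Order.TTheory GRing.Theory Num.Theory.
Local Open Scope ring_scope.

(* The generalized Taft algebra T_lam(r,m), modelled concretely on its *)
(* basis { g^a x^b : a < m, b < r }.                                   *)
Section Taft.
Variables (K : fieldType) (m r : nat) (lam : K).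

Local Notation TA := {ffun 'I_m * 'I_r -> K^o}.

(* the basis element g^(a mod m) x^b  (which is 0 when b >= r) *)
Definition tbn (a b : nat) : TA :=
  [ffun p : 'I_m * 'I_r => (((p.1 : nat) == (a %% m)%N) && ((p.2 : nat) == b))%:R].

(* (g^a x^b)(g^c x^e) = lam^(-bc) g^(a+c) x^(b+e)   (from gx = lam xg) *)
Definition bmul (p q : 'I_m * 'I_r) : TA :=
  lam ^- (p.2 * q.1) *: tbn (p.1 + q.1) (p.2 + q.2).

Definition tmul (s t : TA) : TA :=
  \sum_(p : 'I_m * 'I_r) \sum_(q : 'I_m * 'I_r) (s p * t q) *: bmul p q.

Definition tone : TA := tbn 0 0.
Definition tg : TA := tbn 1 0.
Definition tx : TA := tbn 0 1.
Definition tginv : TA := tbn m.-1 0.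

(* T (x) T, coefficients on pairs of basis elements *)
Local Notation TT := {ffun ('I_m * 'I_r) * ('I_m * 'I_r) -> K^o}.

Definition tens (s t : TA) : TT := [ffun pq => s pq.1 * t pq.2].

Definition ttmul (u v : TT) : TT :=
  \sum_(pq : ('I_m * 'I_r) * ('I_m * 'I_r))
   \sum_(pq' : ('I_m * 'I_r) * ('I_m * 'I_r))
     (u pq * v pq') *: tens (bmul pq.1 pq'.1) (bmul pq.2 pq'.2).

(* Delta(g^a x^b) = (g (x) g)^a (1 (x) x + x (x) g)^b *)
Definition comul_b (a b : nat) : TT :=
  iter a (ttmul (tens tg tg))
    (iter b (ttmul (tens tone tx + tens tx tg)) (tens tone tone)).

Definition comul (t : TA) : TT := \sum_(p : 'I_m * 'I_r) t p *: comul_b p.1 p.2.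

Definition counit (t : TA) : K := \sum_(p : 'I_m * 'I_r | (p.2 : nat) == 0%N) t p.

(* S(g^a x^b) = S(x)^b S(g)^a = (- x g^-1)^b g^-a *)
Definition antipode_b (a b : nat) : TA :=
  iter b (tmul (- tmul tx tginv)) (iter a (tmul tginv) tone).

Definition antipode (t : TA) : TA := \sum_(p : 'I_m * 'I_r) t p *: antipode_b p.1 p.2.

Definition hopf_ideal (I : TA -> Prop) : Prop :=
  I 0 /\
  (forall u v, I u -> I v -> I (u + v)) /\
  (forall (c : K) u, I u -> I (c *: u)) /\
  (forall t u, I u -> I (tmul t u) /\ I (tmul u t)) /\
  (forall u, I u -> counit u = 0) /\
  (forall u, I u -> I (antipode u)) /\
  (forall u, I u -> exists s : seq (TA * TA),
      (forall pq, pq \in s -> I pq.1 \/ I pq.2) /\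
      comul u = \sum_(pq <- s) tens pq.1 pq.2).

Section Action.
Variable A : algType K.

Definition taft_act (G X : A -> A) (t : TA) (v : A) : A :=
  \sum_(p : 'I_m * 'I_r) t p *: iter p.1 G (iter p.2 X v).

(* (G, X) define a T-module algebra structure on A: A is a T-module
   (relations gx = lam xg, g^m = 1, x^r = 0), and the generators act
   compatibly with the multiplication and unit, using
   Delta(g) = g (x) g, Delta(x) = 1 (x) x + x (x) g, eps(g)=1, eps(x)=0. *)
Definition taft_module_algebra (G X : A -> A) : Prop :=
  (forall (c : K) u v, G (c *: u + v) = c *: G u + G v) /\
  (forall (c : K) u v, X (c *: u + v) = c *: X u + X v) /\
  (forall u, G (X u) = lam *: X (G u)) /\
  (forall u, iter m G u = u) /\
  (forall u, iter r X u = 0) /\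
  G 1 = 1 /\ (forall u v, G (u * v) = G u * G v) /\
  X 1 = 0 /\ (forall u v, X (u * v) = u * X v + X u * G v).

Definition inner_faithful (G X : A -> A) : Prop :=
  forall I, hopf_ideal I -> (forall t v, I t -> taft_act G X t v = 0) ->
    forall t, I t -> t = 0.

End Action.
End Taft.

(* The path algebra of the cyclic double quiver Qbar on n vertices:    *)
(* vertices e i, arrows a i : i -> i+1, as_ i : i+1 -> i (mod n).      *)
Section PathAlgebra.
Variables (K : fieldType) (A : algType K) (n : nat) (e a as_ : nat -> A).

(* arrows: (i, false) = a_i, (i, true) = a_i^* *)
Definition arr_src (x : 'I_n * bool) : nat :=
  if x.2 then (((x.1 : nat) + 1) %% n)%N else x.1.
Definition arr_tgt (x : 'I_n * bool) : nat :=
  if x.2 then (x.1 : nat) else (((x.1 : nat) + 1) %% n)%N.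
Definition arr_el (x : 'I_n * bool) : A := if x.2 then as_ x.1 else a x.1.

(* a path: starting vertex and list of arrows *)
Definition qpath := ('I_n * seq ('I_n * bool))%type.

Fixpoint chain (v : nat) (s : seq ('I_n * bool)) : bool :=
  if s is x :: s' then (arr_src x == v) && chain (arr_tgt x) s' else true.

Definition valid_path (p : qpath) : bool := chain p.1 p.2.

Definition path_eval (p : qpath) : A :=
  if p.2 is [::] then e p.1 else \prod_(x <- p.2) arr_el x.

Definition is_path_algebra : Prop :=
  (forall i j, (i < n)%N -> (j < n)%N -> e i * e j = if i == j then e i else 0) /\
  \sum_(i < n) e i = 1 /\
  (forall i, (i < n)%N ->
     a i = e i * a i * e (((i + 1) %% n)%N) /\ as_ i = e (((i + 1) %% n)%N) * as_ i * e i) /\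
  (forall (ps : seq qpath) (c : qpath -> K), uniq ps -> all valid_path ps ->
     \sum_(p <- ps) c p *: path_eval p = 0 -> forall p, p \in ps -> c p = 0) /\
  (forall u : A, exists (ps : seq qpath) (c : qpath -> K),
     all valid_path ps /\ u = \sum_(p <- ps) c p *: path_eval p).

(* linearity of the action of x: vertices go to the span of vertices,
   arrows to the span of vertices and arrows *)
Definition in_span_vertices (u : A) : Prop :=
  exists c : nat -> K, u = \sum_(j < n) c j *: e j.
Definition in_span_vert_arrows (u : A) : Prop :=
  exists c0 c1 c2 : nat -> K,
    u = \sum_(j < n) (c0 j *: e j + c1 j *: a j + c2 j *: as_ j).

End PathAlgebra.

(* The quiver-Taft map on an arrow u with source s and target t:
   sigma(u) = x.u - gamma_t u + gamma_s lam^-1 (g.u) *)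
Definition qt_sigma (K : fieldType) (A : algType K) (G X : A -> A) (lam : K)
  (gam : nat -> K) (s t : nat) (u : A) : A :=
  X u - gam t *: u + (gam s / lam) *: G u.

From HB Require Import structures.
From mathcomp Require Import all_boot all_order all_algebra.
From mathcomp Require Import zify ring.
Set Implicit Arguments. Unset Strict Implicit. Unset Printing Implicit Defensive.
Import Order.TTheory GRing.Theory Num.Theory.
Local Open Scope ring_scope.

(* For u with e_s u e_t = u, the twisted Leibniz rule for x together with
   g.e_s = e_(s+d) and x.e_s = gam_s e_s - gam_s lam^-1 e_(s+d) gives
   sigma(u) = e_s (x.u) e_(t+d).  Hence sigma(a_i) is the (i, i+1+d) corner of x.a_i,
   which lies in the span of vertices and arrows: the only candidates are e_i
   (d = n-1) and a*_(i-1) (d = n-2); dually sigma(a*_i) is a multiple of e_(i+1)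
   (d = 1) or of a_(i+1) (d = 2).  The relation gx = lam xg makes sigma twisted
   equivariant, g.sigma(u) = lam sigma(g.u), which links the coefficient at i to
   the one at i+d, i.e. at i-1, i-2, i+1 or i+2; solving these recurrences from
   the free coefficients at i = 0, 1 gives the products of the statement. *)

Lemma modn_lt_addnn x n : (x < n + n)%N -> (x %% n = if x < n then x else x - n)%N.
Proof.
move=> x_lt; case: ltnP => [|le_nx]; first exact: modn_small.
by rewrite -{1}(subnK le_nx) modnDr modn_small //; lia.
Qed.

(* Rewrites every innermost [x %% n] with [x < 2n] into [x] or [x - n],
   splitting on [x < n], so that [lia] can finish. *)
Ltac mod_reduce :=
  repeat match goal with |- context [(?x %% ?n)%N] =>
    lazymatch x with context [(_ %% _)%N] => fail | _ =>
      rewrite (@modn_lt_addnn x n); [case: (ltnP x n) => ? | lia] end end.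

Lemma ltn_ind2 n (P : nat -> Prop) :
  P 0%N -> P 1%N -> (forall k, (k.+2 < n)%N -> P k -> P k.+2) ->
  forall k, (k < n)%N -> P k.
Proof.
move=> P0 P1 PS; suff PP k : ((k < n)%N -> P k) /\ ((k.+1 < n)%N -> P k.+1).
  by move=> k; case: (PP k).
elim: k => [|k [Pk Pk1]]; first by [].
by split=> // lt_k2n; apply: PS (Pk _) => //; lia.
Qed.

Lemma prod_half_recl (R : ringType) (F : nat -> nat -> R) j :
  (forall k, F j.+2 k.+1 = F j k) ->
  \prod_(k < j.+2./2) F j.+2 k = F j.+2 0%N * \prod_(k < j./2) F j k.
Proof.
by move=> FS; rewrite [LHS]big_ord_recl; congr (_ * _); apply: eq_bigr => k _; rewrite FS.
Qed.

Lemma linearZ_of_linearP (K : fieldType) (U V : lmodType K) (f : U -> V) :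
  (forall c u v, f (c *: u + v) = c *: f u + f v) -> forall c u, f (c *: u) = c *: f u.
Proof.
move=> fP c u; have f0 : f 0 = 0.
  by apply: (@addrI _ (f 0)); rewrite addr0 -{1}(scale1r (f 0)) -fP scale1r addr0.
by rewrite -[c *: u]addr0 fP f0 addr0.
Qed.

Lemma scalerIv (K : fieldType) (V : lmodType K) (v : V) :
  v != 0 -> injective ( *:%R^~ v : K -> V).
Proof.
move=> v_neq0 x y /eqP; rewrite -subr_eq0 -scalerBl scaler_eq0 (negbTE v_neq0) orbF.
by rewrite subr_eq0 => /eqP.
Qed.

Section PathAlgebraBasics.
Variables (K : fieldType) (A : algType K) (n : nat) (e a as_ : nat -> A).
Hypothesis n_gt0 : (0 < n)%N.
Hypothesis vertex_mul : forall i j, (i < n)%N -> (j < n)%N ->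
  e i * e j = if i == j then e i else 0.
Hypothesis arrow_ends : forall i, (i < n)%N ->
  a i = e i * a i * e ((i + 1) %% n)%N /\ as_ i = e ((i + 1) %% n)%N * as_ i * e i.

Lemma path_eval_neq0 (p : qpath n) :
  is_path_algebra n e a as_ -> valid_path p -> path_eval e a as_ p != 0.
Proof.
case=> _ [_ [_ [indep _]]] p_valid; apply/eqP => p0.
have := indep [:: p] (fun _ => 1) isT; rewrite /= p_valid big_seq1 scale1r p0.
by move=> /(_ isT erefl p (mem_head _ _)) /eqP; rewrite oner_eq0.
Qed.

Lemma vertex_neq0 i : is_path_algebra n e a as_ -> (i < n)%N -> e i != 0.
Proof. by move=> Qbar lt_in; exact: (path_eval_neq0 (p := (Ordinal lt_in, [::])) Qbar). Qed.

Lemma rev_arrow_neq0 i : is_path_algebra n e a as_ -> (i < n)%N -> as_ i != 0.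
Proof.
move=> Qbar lt_in.
pose p : qpath n := (Ordinal (ltn_pmod (i + 1) n_gt0), [:: (Ordinal lt_in, true)]).
have := path_eval_neq0 (p := p) Qbar; rewrite /path_eval /= big_seq1; apply.
by rewrite /valid_path /= /arr_src /= eqxx.
Qed.

Lemma vertex_sandwich u p q s t : (p < n)%N -> (q < n)%N -> (s < n)%N -> (t < n)%N ->
  e p * u * e q = u -> e s * u * e t = if (s == p) && (q == t) then u else 0.
Proof.
move=> lt_pn lt_qn lt_sn lt_tn upq; rewrite -{1}upq !mulrA vertex_mul //.
case: eqP => [->|_] /=; last by rewrite !mul0r.
by rewrite -mulrA vertex_mul //; case: eqP => _; rewrite ?upq ?mulr0.
Qed.

Lemma sum_ord_single (F : nat -> A) k : (k < n)%N ->
  (forall j, (j < n)%N -> j != k -> F j = 0) -> \sum_(j < n) F j = F k.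
Proof.
move=> lt_kn F0; rewrite (bigD1 (Ordinal lt_kn)) //= big1 ?addr0 // => j neq_jk.
by apply: F0 => //; apply: contra neq_jk => /eqP jk; apply/eqP/val_inj.
Qed.

Lemma vertex_sandwich_span s t (c0 c1 c2 : nat -> K) : (s < n)%N -> (t < n)%N ->
  e s * (\sum_(j < n) (c0 j *: e j + c1 j *: a j + c2 j *: as_ j)) * e t =
    (if s == t then c0 s *: e s else 0)
  + (if ((s + 1) %% n)%N == t then c1 s *: a s else 0)
  + (if s == ((t + 1) %% n)%N then c2 t *: as_ t else 0).
Proof.
move=> lt_sn lt_tn; have lt_mod j : (j %% n < n)%N by rewrite ltn_pmod.
have ends_e j : (j < n)%N -> e j * e j * e j = e j.
  by move=> lt_jn; rewrite (vertex_mul lt_jn lt_jn) eqxx (vertex_mul lt_jn lt_jn) eqxx.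
rewrite mulr_sumr mulr_suml; under eq_bigr => j _.
  rewrite !mulrDr !mulrDl -!scalerAr -!scalerAl.
  rewrite (vertex_sandwich _ _ _ _ (ends_e j (ltn_ord j))) //.
  rewrite (vertex_sandwich _ _ _ _ (esym (arrow_ends (ltn_ord j)).1)) ?lt_mod //.
  rewrite (vertex_sandwich _ _ _ _ (esym (arrow_ends (ltn_ord j)).2)) ?lt_mod //.
  over.
rewrite !big_split /=.
rewrite (@sum_ord_single (fun j => c0 j *: if (s == j) && (j == t) then e j else 0) s)
  => [|//|j _]; last by rewrite eq_sym => /negbTE->; rewrite scaler0.
rewrite (@sum_ord_single
  (fun j => c1 j *: if (s == j) && (((j + 1) %% n)%N == t) then a j else 0) s)
  => [|//|j _]; last by rewrite eq_sym => /negbTE->; rewrite scaler0.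
rewrite (@sum_ord_single
  (fun j => c2 j *: if (s == ((j + 1) %% n)%N) && (j == t) then as_ j else 0) t)
  => [|//|j _ /negbTE->]; last by rewrite andbF scaler0.
by rewrite !eqxx !andbT /= ![_ *: (if _ then _ else _)]fun_if !scaler0.
Qed.
End PathAlgebraBasics.

Section Coefficients.
Variables (K : fieldType) (lam : K) (mu mus : nat -> K).

Definition coef_a i := lam ^+ i./2 * (\prod_(k < i./2) mu (i - 2 * k)%N)
  / (\prod_(k < i./2) mus (i - 1 - 2 * k)%N).

Definition coef_as i := lam ^- i./2 * (\prod_(k < i./2) mu (i - 1 - 2 * k)%N)
  / (\prod_(k < i./2) mus (i - 2 - 2 * k)%N).

Lemma coef_a0 : coef_a 0 = 1. Proof. by rewrite /coef_a !big_ord0 expr0 invr1 !mulr1. Qed.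
Lemma coef_a1 : coef_a 1 = 1. Proof. by rewrite /coef_a !big_ord0 expr0 invr1 !mulr1. Qed.
Lemma coef_as0 : coef_as 0 = 1. Proof. by rewrite /coef_as !big_ord0 expr0 invr1 !mulr1. Qed.
Lemma coef_as1 : coef_as 1 = 1. Proof. by rewrite /coef_as !big_ord0 expr0 invr1 !mulr1. Qed.

Lemma coef_aSS k : coef_a k.+2 = lam * mu k.+2 / mus k.+1 * coef_a k.
Proof.
rewrite /coef_a (@prod_half_recl _ (fun i j => mu (i - 2 * j)%N)) => [|j];
  last by congr mu; lia.
rewrite (@prod_half_recl _ (fun i j => mus (i - 1 - 2 * j)%N)) => [|j];
  last by congr mus; lia.
rewrite /= muln0 !subn0 subn1 exprS invfM; ring.
Qed.

Lemma coef_asSS k : coef_as k.+2 = (lam * mus k)^-1 * mu k.+1 * coef_as k.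
Proof.
rewrite /coef_as (@prod_half_recl _ (fun i j => mu (i - 1 - 2 * j)%N)) => [|j];
  last by congr mu; lia.
rewrite (@prod_half_recl _ (fun i j => mus (i - 2 - 2 * j)%N)) => [|j];
  last by congr mus; lia.
rewrite /= muln0 !subn0 subn1 subn2 exprS !invfM; ring.
Qed.
End Coefficients.

Section QuiverTaftMap.
Variables (K : fieldType) (A : algType K) (n : nat) (e a as_ : nat -> A).
Variables (G X : A -> A) (d : nat) (lam : K) (mu mus gam : nat -> K).
Hypotheses (n_ge3 : (3 <= n)%N) (d_gt0 : (0 < d)%N) (d_le : (d <= n - 1)%N).
Hypothesis vertex_mul : forall i j, (i < n)%N -> (j < n)%N ->
  e i * e j = if i == j then e i else 0.
Hypothesis arrow_ends : forall i, (i < n)%N ->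
  a i = e i * a i * e ((i + 1) %% n)%N /\ as_ i = e ((i + 1) %% n)%N * as_ i * e i.
Hypotheses (e_neq0 : forall i, (i < n)%N -> e i != 0)
           (as_neq0 : forall i, (i < n)%N -> as_ i != 0).
Hypotheses (G_linP : forall (c : K) u v, G (c *: u + v) = c *: G u + G v)
           (X_linP : forall (c : K) u v, X (c *: u + v) = c *: X u + X v).
Hypothesis GX : forall u, G (X u) = lam *: X (G u).
Hypothesis GM : forall u v, G (u * v) = G u * G v.
Hypothesis XM : forall u v, X (u * v) = u * X v + X u * G v.
Hypotheses (lam_neq0 : lam != 0) (mus_neq0 : forall i, (i < n)%N -> mus i != 0).
Hypothesis Ge : forall i, (i < n)%N -> G (e i) = e ((i + d) %% n)%N.
Hypothesis Ga : forall i, (i < n)%N -> G (a i) = mu i *: a ((i + d) %% n)%N.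
Hypothesis Gas : forall i, (i < n)%N -> G (as_ i) = mus i *: as_ ((i + d) %% n)%N.
Hypothesis Xe : forall i, (i < n)%N ->
  X (e i) = gam i *: e i - (gam i / lam) *: e ((i + d) %% n)%N.
Hypothesis Xa_span : forall i, (i < n)%N -> in_span_vert_arrows n e a as_ (X (a i)).
Hypothesis Xas_span : forall i, (i < n)%N -> in_span_vert_arrows n e a as_ (X (as_ i)).

Let n_gt0 : (0 < n)%N. Proof. lia. Qed.
Let lt_mod i : (i %% n < n)%N. Proof. exact: ltn_pmod. Qed.

Local Notation sigma := (qt_sigma G X lam gam).
Local Notation sigma_a i := (sigma i ((i + 1) %% n)%N (a i)).
Local Notation sigma_as i := (sigma ((i + 1) %% n)%N i (as_ i)).

Lemma qt_sigma_sandwich u s t : (s < n)%N -> (t < n)%N -> e s * u * e t = u ->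
  sigma s t u = e s * X u * e ((t + d) %% n)%N.
Proof.
move=> lt_sn lt_tn ust.
have shift_neq i : (i < n)%N -> (i == (i + d) %% n)%N = false.
  by move=> lt_in; mod_reduce; apply/eqP; lia.
have su : e s * u = u by rewrite -{1}ust !mulrA vertex_mul ?eqxx.
have ut : u * e t = u by rewrite -{1}ust -mulrA vertex_mul ?eqxx.
have ut' : u * e ((t + d) %% n)%N = 0.
  by rewrite -ut -mulrA vertex_mul ?lt_mod // shift_neq // mulr0.
have Gust : e ((s + d) %% n)%N * G u * e ((t + d) %% n)%N = G u.
  by rewrite -{2}ust !GM !Ge.
have s'Gu : e ((s + d) %% n)%N * G u = G u.
  by rewrite -{1}Gust !mulrA vertex_mul ?lt_mod // eqxx Gust.
have XeGu : X (e s) * G u = - ((gam s / lam) *: G u).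
  rewrite Xe // mulrBl -!scalerAl -{1}s'Gu mulrA vertex_mul ?lt_mod // shift_neq //.
  by rewrite mul0r scaler0 sub0r s'Gu.
have sXu : e s * X u = X u + (gam s / lam) *: G u.
  by rewrite -{2}su XM XeGu addrNK.
have Xut' : X u * e ((t + d) %% n)%N = X u - gam t *: u.
  rewrite -{2}ut XM Xe // Ge // mulrBr -!scalerAr ut ut' scaler0 subr0.
  by rewrite [gam t *: u + _]addrC addrK.
by rewrite /qt_sigma -mulrA Xut' mulrBr -scalerAr su sXu addrAC.
Qed.

Lemma qt_sigmaZ c s t u : sigma s t (c *: u) = c *: sigma s t u.
Proof.
rewrite /qt_sigma !(linearZ_of_linearP G_linP, linearZ_of_linearP X_linP).
by rewrite scalerDr scalerBr !scalerA mulrC [c * _]mulrC [_ / lam * c]mulrC.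
Qed.

Lemma G_qt_sigma u s t : (s < n)%N -> (t < n)%N -> e s * u * e t = u ->
  G (sigma s t u) = lam *: sigma ((s + d) %% n)%N ((t + d) %% n)%N (G u).
Proof.
move=> lt_sn lt_tn ust; rewrite !qt_sigma_sandwich //; last by rewrite -{2}ust !GM !Ge.
by rewrite !GM GX Ge // Ge ?lt_mod // scalerAl scalerAr.
Qed.

Lemma G_sigma_a i : (i < n)%N -> G (sigma_a i) = (lam * mu i) *: sigma_a ((i + d) %% n)%N.
Proof.
move=> lt_in; rewrite G_qt_sigma ?lt_mod -?(arrow_ends lt_in).1 // Ga // qt_sigmaZ scalerA.
by rewrite !modnDml addnAC.
Qed.

Lemma G_sigma_as i : (i < n)%N -> G (sigma_as i) = (lam * mus i) *: sigma_as ((i + d) %% n)%N.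
Proof.
move=> lt_in; rewrite G_qt_sigma ?lt_mod -?(arrow_ends lt_in).2 // Gas // qt_sigmaZ scalerA.
by rewrite !modnDml addnAC.
Qed.

Lemma sigma_a_shape i : (i < n)%N -> exists f, sigma_a i =
  if d == (n - 2)%N then f *: as_ ((i + n - 1) %% n)%N
  else if d == (n - 1)%N then f *: e i else 0.
Proof.
move=> lt_in; have [c0 [c1 [c2 Xai]]] := Xa_span lt_in.
rewrite qt_sigma_sandwich ?lt_mod -?(arrow_ends lt_in).1 // Xai.
rewrite vertex_sandwich_span ?lt_mod //.
have -> : (i == ((i + 1) %% n + d) %% n)%N = (d == n - 1)%N.
  by mod_reduce; apply/eqP/eqP; lia.
have -> : (((i + 1) %% n)%N == (((i + 1) %% n + d) %% n)%N) = false.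
  by mod_reduce; apply/eqP; lia.
have -> : (i == (((i + 1) %% n + d) %% n + 1) %% n)%N = (d == n - 2)%N.
  by mod_reduce; apply/eqP/eqP; lia.
case: (eqVneq d (n - 2)%N) => [d_n2|_]; last first.
  by case: ifP => _; [exists (c0 i) | exists 0]; rewrite !addr0.
exists (c2 (((i + 1) %% n + d) %% n)%N).
have -> : (((i + 1) %% n + d) %% n = (i + n - 1) %% n)%N.
  by rewrite d_n2; mod_reduce; lia.
have /negbTE-> : d != (n - 1)%N by apply/eqP; lia.
by rewrite !add0r.
Qed.

Lemma sigma_as_shape i : (i < n)%N -> exists f, sigma_as i =
  if d == 2%N then f *: a ((i + 1) %% n)%N
  else if d == 1%N then f *: e ((i + 1) %% n)%N else 0.
Proof.
move=> lt_in; have [c0 [c1 [c2 Xasi]]] := Xas_span lt_in.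
rewrite qt_sigma_sandwich ?lt_mod -?(arrow_ends lt_in).2 // Xasi.
rewrite vertex_sandwich_span ?lt_mod //.
have -> : (((i + 1) %% n)%N == ((i + d) %% n)%N) = (d == 1)%N.
  by mod_reduce; apply/eqP/eqP; lia.
have -> : ((((i + 1) %% n + 1) %% n)%N == ((i + d) %% n)%N) = (d == 2)%N.
  by mod_reduce; apply/eqP/eqP; lia.
have -> : (((i + 1) %% n)%N == (((i + d) %% n + 1) %% n)%N) = false.
  by mod_reduce; apply/eqP; lia.
rewrite addr0; case: (eqVneq d 2%N) => [d2|_]; last first.
  by case: ifP => _; [exists (c0 ((i + 1) %% n)%N) | exists 0]; rewrite ?addr0.
by exists (c1 ((i + 1) %% n)%N); rewrite d2 add0r.
Qed.

Lemma sigma_a_dn2 : d = (n - 2)%N -> exists c0 c1, forall i, (i < n)%N ->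
  sigma_a i =
    (coef_a lam mu mus i * (if odd i then c1 else c0)) *: as_ ((i + n - 1) %% n)%N.
Proof.
move=> d_n2; have lt1n : (1 < n)%N by lia.
have shape i : (i < n)%N -> exists f, sigma_a i = f *: as_ ((i + n - 1) %% n)%N.
  by move=> /sigma_a_shape; rewrite d_n2 eqxx.
have [c0 sig0] := shape 0%N n_gt0; have [c1 sig1] := shape 1%N lt1n.
exists c0, c1; apply: ltn_ind2 => [|| k lt_k2n sigk].
- by rewrite sig0 coef_a0 mul1r.
- by rewrite sig1 coef_a1 mul1r.
have lt_k1n : (k.+1 < n)%N by lia.
have [idx1 idx2 idx3] : [/\ (k.+2 + n - 1) %% n = k.+1, (k.+2 + d) %% n = k
                        & (k.+1 + d) %% n = (k + n - 1) %% n]%N.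
  by rewrite d_n2; split; mod_reduce; lia.
have [g sigk2] := shape k.+2 lt_k2n; move: (G_sigma_a lt_k2n).
rewrite sigk2 idx1 idx2 sigk (linearZ_of_linearP G_linP) Gas // idx3 !scalerA.
move/(scalerIv (as_neq0 (lt_mod _))) => g_mus.
rewrite coef_aSS /= negbK; congr (_ *: _).
apply: (mulIf (mus_neq0 lt_k1n)); rewrite g_mus.
by set c := if odd k then c1 else c0; field; exact: mus_neq0.
Qed.

Lemma sigma_a_dn1 : d = (n - 1)%N -> exists c, forall i, (i < n)%N ->
  sigma_a i = (lam ^+ i * (\prod_(k < i) mu k.+1) * c) *: e i.
Proof.
move=> d_n1; have /negbTE d_n2 : d != (n - 2)%N by apply/eqP; lia.
have shape i : (i < n)%N -> exists f, sigma_a i = f *: e i.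
  by move=> /sigma_a_shape; rewrite d_n2 d_n1 eqxx.
have [c sig0] := shape 0%N n_gt0; exists c.
elim=> [_|k sigk lt_k1n]; first by rewrite sig0 expr0 big_ord0 !mul1r.
have lt_kn : (k < n)%N by lia.
have idx : ((k.+1 + d) %% n = k)%N by rewrite d_n1; mod_reduce; lia.
have [g sigk1] := shape k.+1 lt_k1n; move: (G_sigma_a lt_k1n).
rewrite sigk1 idx (sigk lt_kn) (linearZ_of_linearP G_linP) Ge // idx scalerA.
move/(scalerIv (e_neq0 lt_kn)) => ->.
by rewrite exprS big_ord_recr /=; congr (_ *: _); ring.
Qed.

Lemma sigma_as_d2 : d = 2%N -> exists c0 c1, forall i, (i < n)%N ->
  sigma_as i =
    (coef_as lam mu mus i * (if odd i then c1 else c0)) *: a ((i + 1) %% n)%N.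
Proof.
move=> d2; have lt1n : (1 < n)%N by lia.
have shape i : (i < n)%N -> exists f, sigma_as i = f *: a ((i + 1) %% n)%N.
  by move=> /sigma_as_shape; rewrite d2 eqxx.
have [c0 sig0] := shape 0%N n_gt0; have [c1 sig1] := shape 1%N lt1n.
exists c0, c1; apply: ltn_ind2 => [|| k lt_k2n sigk].
- by rewrite sig0 coef_as0 mul1r.
- by rewrite sig1 coef_as1 mul1r.
have [lt_kn lt_k1n] : (k < n)%N /\ (k.+1 < n)%N by lia.
have [idx1 idx2 idx3] : [/\ (k + 1) %% n = k.+1, (k + d) %% n = k.+2
                        & k.+1 + d = k.+2 + 1]%N.
  by rewrite d2; split; mod_reduce; lia.
have lam_mus_neq0 : lam * mus k != 0 by rewrite mulf_neq0 ?mus_neq0.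
move: (G_sigma_as lt_kn).
rewrite sigk idx1 idx2 (linearZ_of_linearP G_linP) Ga ?idx3 //.
move=> /(congr1 ( *:%R (lam * mus k)^-1)); rewrite scalerK // => <-.
by rewrite !scalerA coef_asSS /= negbK; congr (_ *: _); ring.
Qed.

Lemma sigma_as_d1 : d = 1%N -> exists c, forall i, (i < n)%N ->
  sigma_as i = ((lam ^+ i * \prod_(k < i) mus k)^-1 * c) *: e ((i + 1) %% n)%N.
Proof.
move=> d1; have /negbTE d2 : d != 2%N by apply/eqP; lia.
have shape i : (i < n)%N -> exists f, sigma_as i = f *: e ((i + 1) %% n)%N.
  by move=> /sigma_as_shape; rewrite d2 d1 eqxx.
have [c sig0] := shape 0%N n_gt0; exists c.
elim=> [_|k sigk lt_k1n]; first by rewrite sig0 expr0 big_ord0 mul1r invr1 mul1r.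
have lt_kn : (k < n)%N by lia.
have [idx1 idx2] : [/\ (k + 1) %% n = k.+1 & (k + d) %% n = k.+1]%N.
  by rewrite d1; split; mod_reduce; lia.
have lam_mus_neq0 : lam * mus k != 0 by rewrite mulf_neq0 ?mus_neq0.
move: (G_sigma_as lt_kn).
rewrite (sigk lt_kn) idx1 idx2 (linearZ_of_linearP G_linP) Ge //.
move=> /(congr1 ( *:%R (lam * mus k)^-1)); rewrite scalerK // => <-.
by rewrite d1 scalerA exprS big_ord_recr /= !invfM; congr (_ *: _); ring.
Qed.

Lemma sigma_a_closed_form : exists c0 c1, forall i, (i < n)%N -> sigma_a i =
  if d == (n - 2)%N then
    (coef_a lam mu mus i * (if odd i then c1 else c0)) *: as_ ((i + n - 1) %% n)%N
  else if d == (n - 1)%N then (lam ^+ i * (\prod_(k < i) mu k.+1) * c0) *: e i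
  else 0.
Proof.
case: (eqVneq d (n - 2)%N) => [/sigma_a_dn2 [c0 [c1 sig]]|d_n2].
  by exists c0, c1.
case: (eqVneq d (n - 1)%N) => [/sigma_a_dn1 [c sig]|d_n1].
  by exists c, 0.
exists 0, 0 => i /sigma_a_shape [f ->].
by rewrite (negbTE d_n2) (negbTE d_n1).
Qed.

Lemma sigma_as_closed_form : exists c0 c1, forall i, (i < n)%N -> sigma_as i =
  if d == 2%N then
    (coef_as lam mu mus i * (if odd i then c1 else c0)) *: a ((i + 1) %% n)%N
  else if d == 1%N then ((lam ^+ i * \prod_(k < i) mus k)^-1 * c0) *: e ((i + 1) %% n)%N
  else 0.
Proof.
case: (eqVneq d 2%N) => [/sigma_as_d2 [c0 [c1 sig]]|d_2].
  by exists c0, c1.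
case: (eqVneq d 1%N) => [/sigma_as_d1 [c sig]|d_1].
  by exists c, 0.
exists 0, 0 => i /sigma_as_shape [f ->].
by rewrite (negbTE d_2) (negbTE d_1).
Qed.

End QuiverTaftMap.

Theorem lemma3p1 (K : fieldType) (r m : nat) (lam : K)
  (n : nat) (A : algType K) (e a as_ : nat -> A) (G X : A -> A)
  (d : nat) (mu mus gam : nat -> K) :
  (1 < r)%N -> (0 < m)%N -> (r %| m)%N -> r.-primitive_root lam -> r%:R != 0 :> K ->
  (3 <= n)%N ->
  is_path_algebra n e a as_ ->
  taft_module_algebra m r lam G X ->
  inner_faithful m r lam G X ->
  (forall i, (i < n)%N ->
     in_span_vertices n e (X (e i)) /\
     in_span_vert_arrows n e a as_ (X (a i)) /\
     in_span_vert_arrows n e a as_ (X (as_ i))) ->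
  (0 < d)%N -> (d <= n - 1)%N ->
  (forall i, (i < n)%N -> mu i != 0 /\ mus i != 0) ->
  (forall i, (i < n)%N ->
     G (e i) = e (((i + d) %% n)%N) /\
     G (a i) = mu i *: a (((i + d) %% n)%N) /\
     G (as_ i) = mus i *: as_ (((i + d) %% n)%N)) ->
  (forall i, (i < n)%N ->
     X (e i) = gam i *: e i - (gam i / lam) *: e (((i + d) %% n)%N)) ->
  exists c0 c1 c0s c1s : K, forall i, (i < n)%N ->
    qt_sigma G X lam gam i (((i + 1) %% n)%N) (a i) =
      (if d == (n - 2)%N then
         (if ~~ odd i then
            (lam ^+ i./2 * (\prod_(k < i./2) mu (i - 2 * k)%N)
               / (\prod_(k < i./2) mus (i - 1 - 2 * k)%N) * c0)
              *: as_ (((i + n - 1) %% n)%N)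
          else
            (lam ^+ (i - 1)./2 * (\prod_(k < (i - 1)./2) mu (i - 2 * k)%N)
               / (\prod_(k < (i - 1)./2) mus (i - 1 - 2 * k)%N) * c1)
              *: as_ (((i + n - 1) %% n)%N))
       else if d == (n - 1)%N then
         (lam ^+ i * (\prod_(k < i) mu k.+1) * c0) *: e i
       else 0)
    /\
    qt_sigma G X lam gam (((i + 1) %% n)%N) i (as_ i) =
      (if d == 2%N then
         (if ~~ odd i then
            (lam ^- i./2 * (\prod_(k < i./2) mu (i - 1 - 2 * k)%N)
               / (\prod_(k < i./2) mus (i - 2 - 2 * k)%N) * c0s)
              *: a (((i + 1) %% n)%N)
          else
            (lam ^- (i - 1)./2 * (\prod_(k < (i - 1)./2) mu (i - 1 - 2 * k)%N)
               / (\prod_(k < (i - 1)./2) mus (i - 2 - 2 * k)%N) * c1s)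
              *: a (((i + 1) %% n)%N))
       else if d == 1%N then
         ((lam ^+ i * \prod_(k < i) mus k)^-1 * c0s) *: e (((i + 1) %% n)%N)
       else 0).
Proof.
move=> _ _ _ prim _ n_ge3 Qbar [G_linP [X_linP [GX [_ [_ [_ [GM [_ XM]]]]]]]] _.
move=> X_span d_gt0 d_le mu_neq0 G_rot Xe; have n_gt0 : (0 < n)%N by lia.
have lam_neq0 : lam != 0 by rewrite (prim_root_eq0 prim) -lt0n (prim_order_gt0 prim).
have [vertex_mul [_ [arrow_ends _]]] := Qbar.
have mus_neq0 i (lt_in : (i < n)%N) := (mu_neq0 i lt_in).2.
have Ge i (lt_in : (i < n)%N) := (G_rot i lt_in).1.
have Ga i (lt_in : (i < n)%N) := (G_rot i lt_in).2.1.
have Gas i (lt_in : (i < n)%N) := (G_rot i lt_in).2.2.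
have [c0 [c1 sig_a]] := sigma_a_closed_form n_ge3 d_gt0 d_le vertex_mul arrow_ends
  (fun i => vertex_neq0 Qbar) (fun i => rev_arrow_neq0 n_gt0 Qbar) G_linP X_linP GX GM XM
  lam_neq0 mus_neq0 Ge Ga Gas Xe (fun i lt_in => (X_span i lt_in).2.1).
have [c0s [c1s sig_as]] := sigma_as_closed_form n_ge3 d_gt0 d_le vertex_mul arrow_ends
  G_linP X_linP GX GM XM lam_neq0 mus_neq0 Ge Ga Gas Xe (fun i lt_in => (X_span i lt_in).2.2).
exists c0, c1, c0s, c1s => i lt_in; rewrite sig_a // sig_as //.
(* [coef_a] and [coef_as] unfold to the stated products; for odd i, (i - 1)./2 = i./2. *)
case: (boolP (odd i)) => odd_i //=.
by have -> : ((i - 1)./2 = i./2)%N by lia.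
Qed.
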